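(* Let $n\ge2$ be even. For odd $k\ge1$, define $f_k[x_ix_j]=(x_i-x_j)^k$ in $\mathbb Q[x_1,\ldots,x_n]$. Then $$f_{n-1}[x_1\ldots x_n]=(-1)^{\binom{n/2}{2}}\Big(\prod_{k=0}^{n/2-1}\binom{n-1}{k}\Big)\prod_{1\le i<j\le n}(x_i-x_j).$$ Moreover, $f_{2m-1}[x_1\ldots x_n]=0$ whenever $m\ge1$ and $2m<n$.
   Context: For a skew-symmetric assignment $g[x_ix_j]=-g[x_jx_i]$, the Pfaffian is $$g[x_1\ldots x_n]=\sum s(x_1\ldots x_n,y_1\ldots y_n)\,g[y_1y_2]\cdots g[y_{n-1}y_n],$$ where the sum is over all partitions of $\{x_1,\ldots,x_n\}$ into pairs $\{y_1,y_2\},\ldots,\{y_{n-1},y_n\}$. The sign $s(x_1\ldots x_n,y_1\ldots y_n)$ is the sign of the permutation taking $x_1\ldots x_n$ to $y_1\ldots y_n$, and each summand is independent of how the pairing is listed. *)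

From HB Require Import structures.
From mathcomp Require Import all_boot all_order all_algebra all_fingroup.
From mathcomp Require Import mpoly.
Set Implicit Arguments. Unset Strict Implicit. Unset Printing Implicit Defensive.
Import GRing.Theory.
Local Open Scope ring_scope.

Lemma half_le_self (n : nat) : (n./2 <= n)%N.
Proof. by rewrite leq_half_double -addnn ltnW // ltnS leq_addr. Qed.

(* The position k (0-based) in 'I_n, for k = 2i or 2i+1 with i < n/2;
   i itself (< n) is only used as a dummy default (never reached when n is even). *)
Definition pos (n : nat) (i : 'I_n./2) (k : nat) : 'I_n :=
  insubd (widen_ord (half_le_self n) i) k.

(* Canonical listing of a perfect matching of 'I_n (n even): the permutation s
   lists the pairs {s(0),s(1)}, {s(2),s(3)}, ... with s(2i) < s(2i+1) and
   s(0) < s(2) < s(4) < ... .  Every partition of 'I_n into pairs has exactly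
   one such listing. *)
Definition canon_pairing (n : nat) (s : 'S_n) : bool :=
  [forall i : 'I_n./2, (s (pos i (2 * i)) < s (pos i (2 * i).+1))%N] &&
  [forall i : 'I_n./2, forall j : 'I_n./2,
      (i < j)%N ==> (s (pos i (2 * i)) < s (pos j (2 * j)))%N].

Definition pfaffian (R : comRingType) (n : nat) (g : 'I_n -> 'I_n -> R) : R :=
  \sum_(s : 'S_n | canon_pairing s)
     (-1) ^+ odd_perm s * \prod_(i < n./2) g (s (pos i (2 * i))) (s (pos i (2 * i).+1)).

From mathcomp Require Import all_boot all_algebra all_fingroup.
From mathcomp Require Import mpoly zify ring.
Set Implicit Arguments. Unset Strict Implicit. Unset Printing Implicit Defensive.
Import GRing.Theory.
Local Open Scope ring_scope.

(* Summing over all of 'S_n instead of over canonical listings counts every term of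
   the Pfaffian #|K| times, K the stabiliser of the pairing {0,1}, {2,3}, ...  Over
   all of 'S_n the Pfaffian of a congruent form U^T C U expands multilinearly: it is
   det U * Pf C when U is square and vanishes when U has fewer rows than columns.
   The binomial theorem writes (x_i - x_j)^k as U^T C U with U = (x_j^l) of size
   (k+1) x n and C the antidiagonal matrix of signed binomial coefficients.  For
   k = n-1, det U is a Vandermonde determinant and Pf C is a single signed product,
   only the nested pairing {0,n-1}, {1,n-2}, ... avoiding the zeros of C; for
   k = 2m-1 < n-1, U has too few rows. *)

Lemma incr_ord_id (m : nat) (F : 'I_m -> 'I_m) :
  (forall i j : 'I_m, (i < j)%N -> (F i < F j)%N) -> forall i, F i = i.
Proof.
case: m F => [|m] F Fi i; first by case: i.
pose G x := nat_of_ord (F (inord x)).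
have G_incr x y : (x < y <= m)%N -> (G x < G y)%N.
  by move=> /andP [xy ym]; apply: Fi; rewrite !inordK //; lia.
have G_le x : (G x <= m)%N by rewrite /G -ltnS.
have G_ge x : (x <= m)%N -> (x <= G x)%N.
  by elim: x => [|x IH] xm //; have := IH (ltnW xm); have := G_incr x x.+1; lia.
have G_room d x : (x + d <= m)%N -> (G x + d <= m)%N.
  elim: d x => [|d IH] x xd; first by rewrite addn0 G_le.
  by have := IH x.+1; have := G_incr x x.+1; lia.
apply: val_inj => /=; have := G_ge i; have := G_room (m - i)%N i.
by rewrite /G inord_val; have := ltn_ord i; lia.
Qed.

(* [nest_perm (2h)] lists the nested pairing [{0, 2h-1}, {1, 2h-2}, ...]:
   it sends [2i] to [i] and [2i+1] to [2h-1-i]. *)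
Fixpoint nest_perm (m : nat) : 'S_m :=
  match m return 'S_m with
  | m'.+2 => lift_perm (Ordinal (isT : (1 < m'.+2)%N)) ord_max
                       (lift_perm ord0 ord0 (nest_perm m'))
  | _ => 1%g
  end.

Lemma odd_nest_perm_double h : odd_perm (nest_perm h.*2) = false.
Proof.
elim: h => [|h IH]; first by rewrite odd_perm1.
by rewrite doubleS /= !odd_lift_perm /= IH /= odd_double.
Qed.

Lemma nest_perm_double h (k : 'I_h.*2) :
  nat_of_ord (nest_perm h.*2 k) = if odd k then (h.*2.-1 - k./2)%N else k./2.
Proof.
elim: h k => [|h IH] k; first by case: k.
move: k; rewrite doubleS => k /=.
case: (unliftP (Ordinal (isT : (1 < h.*2.+2)%N)) k) => [k'|] ->; last first.
  by rewrite lift_perm_id.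
rewrite lift_perm_lift; case: (unliftP ord0 k') => [k''|] ->; last first.
  by rewrite lift_perm_id.
rewrite lift_perm_lift /= /bump /=.
have := IH k''; have := ltn_ord k''; have := odd_double_half k''.
have := ltn_ord (nest_perm h.*2 k'').
set e := nat_of_ord _; rewrite !add0n negbK => e_lt k_half k_lt eE.
have -> : (h.*2 < 1 + e)%N = false by apply/negbTE; rewrite -leqNgt; lia.
by have := mul2n h; move: e_lt k_half k_lt eE; case: (odd k'') => /=; lia.
Qed.

Lemma eq_pfaffian (R : comNzRingType) (m : nat) (A B : 'I_m -> 'I_m -> R) :
  A =2 B -> pfaffian A = pfaffian B.
Proof.
by move=> AB; apply: eq_bigr => s _; congr (_ * _); apply: eq_bigr => i _; rewrite AB.
Qed.

Lemma mulrn_rat_inj (V : lmodType rat) (c : nat) :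
  (0 < c)%N -> injective (fun x : V => x *+ c).
Proof.
move=> c_gt0 x y /= /(congr1 ( *:%R (c%:R : rat)^-1)).
by rewrite -!scaler_nat !scalerA mulVf ?scale1r // Num.Theory.pnatr_eq0 -lt0n.
Qed.

Section BinomialForm.
Variable R : comNzRingType.

Definition binom_coef (k l l' : nat) : R :=
  if (l + l' == k)%N then (-1) ^+ l' * ('C(k, l'))%:R else 0.

Lemma subrX_binom_coef (x y : R) (k p : nat) : k.+1 = p ->
  (x - y) ^+ k = \sum_(l < p) \sum_(l' < p) binom_coef k l l' * (x ^+ l * y ^+ l').
Proof.
move=> <-; rewrite exprDn exchange_big /=; apply: eq_bigr => i _.
have ik : (k - i < k.+1)%N by lia.
rewrite (bigD1 (Ordinal ik)) //= big1 ?addr0; last first.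
  move=> l /eqP ne; rewrite /binom_coef ifF ?mul0r //; apply/negbTE/eqP => E; apply: ne.
  by apply: val_inj => /=; have := ltn_ord i; lia.
rewrite /binom_coef ifT; last by apply/eqP; have := ltn_ord i; lia.
by rewrite (exprNn y) -mulr_natl; ring.
Qed.

Lemma binom_coef_skew k l l' : odd k -> binom_coef k l l' = - binom_coef k l' l.
Proof.
move=> k_odd; rewrite /binom_coef addnC; case: eqP => [E|_]; last by rewrite oppr0.
have -> : l = (k - l')%N by lia.
rewrite bin_sub; last by lia.
rewrite -mulNr; congr (_ * _).
rewrite -[RHS]mulN1r -exprS -[LHS]signr_odd -[RHS]signr_odd /= oddB; last by lia.
by rewrite k_odd negbK.
Qed.

End BinomialForm.

Section SignProducts.
Variable R : comNzRingType.

Lemma prod_ltn_sign (m : nat) :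
  \prod_(i < m) \prod_(j < m | (i < j)%N) (-1 : R) = (-1) ^+ 'C(m, 2).
Proof.
elim: m => [|m IH]; first by rewrite big_ord0.
rewrite big_ord_recl [X in X * _]big_mkcond big_ord_recl /= mul1r prodr_const card_ord.
have -> : \prod_(i < m) \prod_(j < m.+1 | (lift ord0 i < j)%N) (-1 : R) =
          \prod_(i < m) \prod_(j < m | (i < j)%N) (-1 : R).
  apply: eq_bigr => i _; rewrite big_mkcond big_ord_recl /= mul1r [RHS]big_mkcond.
  by apply: eq_bigr => j _.
by rewrite IH -exprD binS bin1 addnC.
Qed.

Lemma prod_ltn_opp (m : nat) (x : 'I_m -> R) :
  \prod_(i < m) \prod_(j < m | (i < j)%N) (x j - x i) =
  (-1) ^+ 'C(m, 2) * \prod_(i < m) \prod_(j < m | (i < j)%N) (x i - x j).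
Proof.
rewrite -prod_ltn_sign -big_split /=; apply: eq_bigr => i _.
by rewrite -big_split /=; apply: eq_bigr => j _; rewrite mulN1r opprB.
Qed.

Lemma det_powers (m : nat) (x : 'I_m -> R) :
  \det (\matrix_(l, a) x a ^+ l) = \prod_(i < m) \prod_(j < m | (i < j)%N) (x j - x i).
Proof.
have -> : \matrix_(l, a) x a ^+ l = Vandermonde m (\row_a x a).
  by apply/matrixP => l a; rewrite !mxE.
by rewrite det_Vandermonde; apply: eq_bigr => i _; apply: eq_bigr => j _; rewrite !mxE.
Qed.

Lemma prod_sign_succ (m : nat) : \prod_(i < m) (-1) ^+ i.+1 = (-1) ^+ 'C(m.+1, 2) :> R.
Proof.
elim: m => [|m IH]; first by rewrite big_ord0.
by rewrite big_ord_recr /= IH -exprD [in RHS]binS bin1.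
Qed.

Lemma sign_binom2_double (m : nat) :
  (-1) ^+ 'C(m.*2, 2) * (-1) ^+ 'C(m.+1, 2) = (-1) ^+ 'C(m, 2) :> R.
Proof.
rewrite -exprD -signr_odd -[RHS]signr_odd binS bin1 !oddD.
have -> : odd 'C(m.*2, 2) = odd m.
  by rewrite bin2 -doubleMl doubleK oddM; case: m => //= m; rewrite odd_double andbT.
by rewrite addbC -addbA addbb addbF.
Qed.

End SignProducts.

Definition skew (R : zmodType) (m : nat) (A : 'I_m -> 'I_m -> R) :=
  forall a b, A a b = - A b a.

Section Pairing.
Variable n : nat.
Hypothesis n_even : ~~ odd n.
Local Notation h := n./2.

Lemma even_halfE : n = (2 * h)%N.
Proof. by have := odd_double_half n; rewrite (negbTE n_even); lia. Qed.

Definition lo (i : 'I_h) : 'I_n := pos i (2 * i).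
Definition hi (i : 'I_h) : 'I_n := pos i (2 * i).+1.
Definition slot (i : 'I_h) (b : bool) : 'I_n := if b then hi i else lo i.

Lemma val_slot i b : val (slot i b) = (2 * i + b)%N.
Proof.
rewrite /slot /lo /hi /pos; have := ltn_ord i; have := even_halfE.
by case: b; rewrite val_insubd; case: ifP => //; lia.
Qed.

Lemma half_ord_lt (k : 'I_n) : (k./2 < h)%N.
Proof. by have := ltn_ord k; have := even_halfE; have := odd_double_half k; lia. Qed.

Definition pair_of (k : 'I_n) : 'I_h := Ordinal (half_ord_lt k).

Lemma pair_of_slot i b : pair_of (slot i b) = i.
Proof. by apply: val_inj => /=; rewrite val_slot; case: b => /=; lia. Qed.

Lemma odd_slot i b : odd (slot i b) = b.
Proof. by rewrite val_slot oddD oddM /=; case: b. Qed.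

Lemma slot_pair_of k : slot (pair_of k) (odd k) = k.
Proof. by apply: val_inj; rewrite val_slot /=; have := odd_double_half k; lia. Qed.

Lemma slotP k : exists i b, k = slot i b.
Proof. by exists (pair_of k), (odd k); rewrite slot_pair_of. Qed.

Lemma slot_inj i j b c : slot i b = slot j c -> i = j /\ b = c.
Proof.
move=> E; split; first by rewrite -(pair_of_slot i b) E pair_of_slot.
by rewrite -(odd_slot i b) E odd_slot.
Qed.

Lemma slot_neq i j b c : i != j -> slot i b != slot j c.
Proof. by move=> ij; apply/eqP => /slot_inj [E _]; rewrite E eqxx in ij. Qed.

Lemma lo_inj : injective lo.
Proof. by move=> i j /(@slot_inj i j false false) []. Qed.

Lemma hi_inj : injective hi.
Proof. by move=> i j /(@slot_inj i j true true) []. Qed.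

Lemma lo_neq_hi i j : lo i != hi j.
Proof. by apply/eqP => /(@slot_inj i j false true) []. Qed.

Definition partner (k : 'I_n) : 'I_n := slot (pair_of k) (~~ odd k).

Lemma partner_slot i b : partner (slot i b) = slot i (~~ b).
Proof. by rewrite /partner pair_of_slot odd_slot. Qed.

Lemma partner_lo i : partner (lo i) = hi i.
Proof. exact: (partner_slot i false). Qed.

Lemma partnerK : involutive partner.
Proof. by move=> k; rewrite -(slot_pair_of k) !partner_slot negbK. Qed.

Lemma partner_neq k : partner k != k.
Proof.
by rewrite -(slot_pair_of k) partner_slot; apply/eqP => /slot_inj [_]; case: odd.
Qed.

Lemma pair_of_partner k : pair_of (partner k) = pair_of k.
Proof. by rewrite -(slot_pair_of k) partner_slot !pair_of_slot. Qed.

(** * Permutations preserving the pairs *)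

Definition preserves_pairs (g : 'S_n) := forall k, g (partner k) = partner (g k).

Definition flips (l : seq 'I_h) : 'S_n := (\prod_(i <- l) tperm (lo i) (hi i))%g.

Lemma tperm_pair i k : tperm (lo i) (hi i) k = if pair_of k == i then partner k else k.
Proof.
have [j [b ->]] := slotP k; rewrite pair_of_slot partner_slot.
have [->|ne] := eqVneq j i; first by case: b; rewrite ?tpermR ?tpermL.
by rewrite tpermD //; [apply: (@slot_neq i j false) | apply: (@slot_neq i j true)];
  rewrite eq_sym.
Qed.

Lemma flipsE l k : uniq l -> flips l k = if pair_of k \in l then partner k else k.
Proof.
elim: l k => [|i l IH] k /=; first by rewrite /flips big_nil perm1.
case/andP => il ul; rewrite /flips big_cons permM tperm_pair -/(flips l) in_cons.
by case: eqP => [E|_] /=; rewrite IH // pair_of_partner E (negbTE il).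
Qed.

Lemma odd_flips l : odd_perm (flips l) = odd (size l).
Proof.
rewrite /flips -(big_map (fun i => (lo i, hi i)) xpredT (fun t => tperm t.1 t.2)).
rewrite odd_perm_prod ?size_map //; apply/allP => t /mapP [i _ ->].
exact: lo_neq_hi.
Qed.

Lemma block_inj (p : 'S_h) : injective (fun k => slot (p (pair_of k)) (odd k)).
Proof.
move=> k1 k2 /= /slot_inj [/perm_inj E1 E2].
by rewrite -(slot_pair_of k1) -(slot_pair_of k2) E1 E2.
Qed.

Definition block_perm (p : 'S_h) : 'S_n := perm (@block_inj p).

Lemma block_permE p k : block_perm p k = slot (p (pair_of k)) (odd k).
Proof. by rewrite permE. Qed.

Lemma block_permM p q : block_perm (p * q)%g = (block_perm p * block_perm q)%g.
Proof.
by apply/permP => k; rewrite !permM !block_permE pair_of_slot odd_slot permM.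
Qed.

Lemma block_perm1 : block_perm 1%g = 1%g.
Proof. by apply/permP => k; rewrite block_permE !perm1 slot_pair_of. Qed.

Lemma block_perm_tperm x y :
  block_perm (tperm x y) = (tperm (lo x) (lo y) * tperm (hi x) (hi y))%g.
Proof.
apply/permP => k; have [i [b ->]] := slotP k.
rewrite block_permE permM pair_of_slot odd_slot; case: b => /=.
  by rewrite (tpermD (lo_neq_hi x i) (lo_neq_hi y i)) -(inj_tperm _ _ _ hi_inj).
by rewrite -(inj_tperm _ _ _ lo_inj) [tperm (hi x) _ _]tpermD //; rewrite eq_sym lo_neq_hi.
Qed.

Lemma odd_block_perm p : odd_perm (block_perm p) = false.
Proof.
have [ts -> _] := prod_tpermP p.
rewrite (big_morph block_perm block_permM block_perm1).
rewrite (big_morph (@odd_perm _) (@odd_permM _) (@odd_perm1 _)).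
rewrite big1_seq // => t _; rewrite block_perm_tperm odd_permM !odd_tperm.
by rewrite (inj_eq lo_inj) (inj_eq hi_inj) addbb.
Qed.

Section PairAction.
Variables (g : 'S_n) (gP : preserves_pairs g).

Lemma pair_action_inj : injective (fun i => pair_of (g (lo i))).
Proof.
move=> i j /=; have [a [b Ea]] := slotP (g (lo i)); have [c [d Ec]] := slotP (g (lo j)).
rewrite Ea Ec !pair_of_slot => ac; subst c.
have [bd|bd] := eqVneq b d.
  by subst d; rewrite -Ea in Ec; move/perm_inj/lo_inj: Ec.
have : g (lo j) = g (hi i).
  by rewrite -partner_lo gP Ea Ec partner_slot; congr slot; move: bd; case: (b); case: (d).
by move/perm_inj => E; have := lo_neq_hi j i; rewrite E eqxx.
Qed.

Definition pair_action : 'S_h := perm pair_action_inj.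

Lemma pair_actionE i : pair_action i = pair_of (g (lo i)).
Proof. by rewrite permE. Qed.

Lemma preserves_pairs_factor :
  g = (flips (enum [pred i | odd (g (lo i))]) * block_perm pair_action)%g.
Proof.
apply/permP => k; rewrite permM block_permE pair_actionE flipsE ?enum_uniq //.
rewrite mem_enum inE; have [i [b ->]] := slotP k; have [a [c Ea]] := slotP (g (lo i)).
rewrite pair_of_slot Ea odd_slot.
have gslot : g (slot i b) = slot a (c (+) b).
  by case: b; rewrite ?addbF //= addbT -partner_lo gP Ea partner_slot.
rewrite gslot; case: c Ea gslot => Ea _;
  by rewrite ?partner_slot pair_of_slot Ea pair_of_slot odd_slot //= negbK.
Qed.

Lemma odd_preserves_pairs : odd_perm g = odd #|[pred i | odd (g (lo i))]|.
Proof.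
by rewrite {1}preserves_pairs_factor odd_permM odd_flips odd_block_perm addbF cardE.
Qed.

End PairAction.

Lemma canon_pairingP (s : 'S_n) : canon_pairing s ->
  (forall i, (s (lo i) < s (hi i))%N) /\
  (forall i j : 'I_h, (i < j)%N -> (s (lo i) < s (lo j))%N).
Proof.
case/andP => /forallP s_pair /forallP s_incr; split=> [i|i j ij]; first exact: s_pair.
by have /forallP/(_ j)/implyP := s_incr i; apply.
Qed.

Lemma preserves_pairsV g : preserves_pairs g -> preserves_pairs g^-1%g.
Proof. by move=> gP k; apply: (@perm_inj _ g); rewrite permKV gP permKV. Qed.

Lemma preserves_pairsM g1 g2 :
  preserves_pairs g1 -> preserves_pairs g2 -> preserves_pairs (g1 * g2)%g.
Proof. by move=> g1P g2P k; rewrite !permM g1P g2P. Qed.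

Lemma canon_pairing_unique (s s' g : 'S_n) : canon_pairing s -> canon_pairing s' ->
  preserves_pairs g -> s = (g * s')%g -> s = s'.
Proof.
move=> /canon_pairingP [s_pair s_incr] /canon_pairingP [s'_pair s'_incr] gP sE.
have {}sE k : s k = s' (g k) by rewrite sE permM.
have g_lo i : odd (g (lo i)) = false.
  have [a [b Ea]] := slotP (g (lo i)); rewrite Ea odd_slot.
  case: b Ea => // Ea; have := s_pair i; rewrite !sE -partner_lo gP Ea partner_slot /=.
  by have := s'_pair a; lia.
pose F i := pair_of (g (lo i)).
have gE i b : g (slot i b) = slot (F i) b.
  have [a [c Ea]] := slotP (g (lo i)).
  have := g_lo i; rewrite /F Ea odd_slot pair_of_slot => c0; subst c.
  by case: b; rewrite /= -?partner_lo ?gP Ea.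
have F_incr (i j : 'I_h) : (i < j)%N -> (F i < F j)%N.
  move=> ij; have := s_incr i j ij.
  rewrite !sE -[lo i]/(slot i false) -[lo j]/(slot j false) !gE /=.
  case: (ltngtP (F i) (F j)) => // [ji|/val_inj ->]; last by lia.
  by have := s'_incr _ _ ji; lia.
by apply/permP => k; have [i [b ->]] := slotP k; rewrite sE gE (incr_ord_id F_incr).
Qed.

Section CanonOf.
Variable sg : 'S_n.

(* The pairing listed by [sg] is [{v, partner_of v}]; its canonical listing puts the
   smaller element of each pair first and orders the pairs by these leaders. *)
Definition partner_of (v : 'I_n) : 'I_n := sg (partner ((sg^-1)%g v)).

Lemma partner_ofK : involutive partner_of.
Proof. by move=> v; rewrite /partner_of permK partnerK permKV. Qed.

Lemma partner_of_neq v : nat_of_ord (partner_of v) <> v.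
Proof.
move/val_inj; rewrite /partner_of => E; have := partner_neq ((sg^-1)%g v).
by rewrite -{2}E permK eqxx.
Qed.

Definition leaders : {set 'I_n} := [set v : 'I_n | (v < partner_of v)%N].

Definition leader_seq := enum leaders.

Lemma size_leader_seq : size leader_seq = h.
Proof.
rewrite -cardE.
have leadersC : ~: leaders = partner_of @^-1: leaders.
  by apply/setP => v; rewrite !inE partner_ofK; have := @partner_of_neq v; lia.
have := cardsC leaders; rewrite leadersC card_preimset ?card_ord; last first.
  exact: can_inj partner_ofK.
by have := even_halfE; lia.
Qed.

Lemma sorted_leader_seq : sorted (fun x y : 'I_n => (x < y)%N) leader_seq.
Proof.
rewrite /leader_seq /enum_mem -enumT; apply: sorted_filter.
  by move=> x y z; apply: ltn_trans.
by rewrite -(@sorted_map _ _ val ltn) val_enum_ord iota_ltn_sorted.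
Qed.

Definition leader (i : 'I_h) : 'I_n := nth (lo i) leader_seq i.

Lemma leader_lt i : (leader i < partner_of (leader i))%N.
Proof.
have : leader i \in leader_seq by apply: mem_nth; rewrite size_leader_seq.
by rewrite mem_enum inE.
Qed.

Lemma leader_incr (i j : 'I_h) : (i < j)%N -> (leader i < leader j)%N.
Proof.
move=> ij; rewrite /leader (set_nth_default (lo i) (lo j)) ?size_leader_seq //.
apply: (sorted_ltn_nth _ _ sorted_leader_seq); rewrite ?inE ?size_leader_seq //.
by move=> x y z; apply: ltn_trans.
Qed.

Lemma leader_inj : injective leader.
Proof.
move=> i j E; apply/val_inj/eqP.
by case: (ltngtP i j) => // ij; have := leader_incr ij; rewrite E ltnn.
Qed.

Definition canon_fun (k : 'I_n) : 'I_n :=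
  if odd k then partner_of (leader (pair_of k)) else leader (pair_of k).

Lemma canon_fun_slot i b :
  canon_fun (slot i b) = if b then partner_of (leader i) else leader i.
Proof. by rewrite /canon_fun pair_of_slot odd_slot. Qed.

Lemma canon_fun_inj : injective canon_fun.
Proof.
move=> k1 k2; have [i [b ->]] := slotP k1; have [j [c ->]] := slotP k2.
rewrite !canon_fun_slot.
have leader_partner i' j' : leader i' <> partner_of (leader j').
  by move=> E; have := leader_lt i'; have := leader_lt j'; rewrite E partner_ofK; lia.
case: b; case: c => E.
- by rewrite (leader_inj (can_inj partner_ofK E)).
- by case: (leader_partner _ _ (esym E)).
- by case: (leader_partner _ _ E).
- by rewrite (leader_inj E).
Qed.

Definition canon_of : 'S_n := perm canon_fun_inj.

Lemma canon_of_canon : canon_pairing canon_of.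
Proof.
apply/andP; split; apply/forallP => i.
  rewrite !permE; change (canon_fun (slot i false) < canon_fun (slot i true))%N.
  by rewrite !canon_fun_slot leader_lt.
apply/forallP => j; apply/implyP => ij; rewrite !permE.
change (canon_fun (slot i false) < canon_fun (slot j false))%N.
by rewrite !canon_fun_slot leader_incr.
Qed.

Lemma preserves_pairs_canon_of : preserves_pairs (sg * canon_of^-1)%g.
Proof.
have canon_partner y : canon_of (partner y) = partner_of (canon_of y).
  have [i [b ->]] := slotP y; rewrite !permE partner_slot !canon_fun_slot.
  by case: b; rewrite ?partner_ofK.
move=> k; apply: (@perm_inj _ canon_of); rewrite !permM permKV canon_partner permKV.
by rewrite /partner_of permK.
Qed.

End CanonOf.

(** * The Pfaffian as a sum over all of ['S_n] *)

Section FullSum.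
Variable R : comNzRingType.

Definition pf_term (A : 'I_n -> 'I_n -> R) (s : 'S_n) : R :=
  (-1) ^+ odd_perm s * \prod_(i < h) A (s (lo i)) (s (hi i)).

Definition pf_full (A : 'I_n -> 'I_n -> R) : R := \sum_(s : 'S_n) pf_term A s.

Definition pair_stab : {set 'S_n} :=
  [set g : 'S_n | [forall k, g (partner k) == partner (g k)]].

Lemma pair_stabP g : reflect (preserves_pairs g) (g \in pair_stab).
Proof. by rewrite inE; apply: (iffP forallP) => gP k; apply/eqP. Qed.

Lemma pair_stab_gt0 : (0 < #|pair_stab|)%N.
Proof. by apply/card_gt0P; exists 1%g; apply/pair_stabP => k; rewrite !perm1. Qed.

Variable A : 'I_n -> 'I_n -> R.
Hypothesis A_skew : skew A.

(* Each swapped pair changes both the sign of the permutation and the sign of one factor. *)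
Lemma pf_term_preserves_pairs (g s : 'S_n) :
  preserves_pairs g -> pf_term A (g * s)%g = pf_term A s.
Proof.
move=> gP; rewrite /pf_term odd_permM (odd_preserves_pairs gP) signr_addb.
pose F := pair_action gP.
have factorE i : A ((g * s)%g (lo i)) ((g * s)%g (hi i)) =
    (-1) ^+ odd (g (lo i)) * A (s (lo (F i))) (s (hi (F i))).
  rewrite !permM /F pair_actionE; have [a [c Ea]] := slotP (g (lo i)).
  rewrite -partner_lo gP Ea partner_slot pair_of_slot odd_slot.
  by case: (c) => /=; rewrite ?mul1r ?expr1 ?mulN1r // A_skew.
under eq_bigr do rewrite factorE; rewrite big_split /=.
have -> : \prod_(i < h) (-1) ^+ odd (g (lo i)) =
          (-1) ^+ #|[pred i | odd (g (lo i))]| :> R.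
  rewrite -prodr_const [RHS]big_mkcond /=; apply: eq_bigr => i _.
  by rewrite inE; case: (odd _).
have -> : \prod_(i < h) A (s (lo (F i))) (s (hi (F i))) =
          \prod_(i < h) A (s (lo i)) (s (hi i)) by rewrite [RHS](reindex_perm F).
by rewrite signr_odd -mulrA mulrCA signrMK.
Qed.

(* Every permutation is uniquely [g * s] with [g] pair-preserving and [s] canonical. *)
Lemma pf_full_pfaffian : pf_full A = pfaffian A *+ #|pair_stab|.
Proof.
rewrite /pfaffian -/(pf_term A _) -sumrMnl.
have split_term sg : pf_term A sg =
    \sum_(s : 'S_n | canon_pairing s)
       (if (sg * s^-1)%g \in pair_stab then pf_term A sg else 0).
  rewrite -big_mkcondr /= (big_pred1 (canon_of sg)) // => s /=.
  apply/andP/eqP => [[cs /pair_stabP sP]|->].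
    apply: esym; apply: (canon_pairing_unique (canon_of_canon sg) cs).
      exact: preserves_pairsM (preserves_pairsV (preserves_pairs_canon_of sg)) sP.
    by rewrite invMg invgK !mulgA mulgKV mulgKV.
  by split; [exact: canon_of_canon | apply/pair_stabP; exact: preserves_pairs_canon_of].
rewrite /pf_full (eq_bigr _ (fun sg _ => split_term sg)) exchange_big /=.
apply: eq_bigr => s cs; rewrite -big_mkcond /=.
rewrite (reindex (fun g => g * s)%g) /=; last first.
  by exists (fun sg => sg * s^-1)%g => x _; rewrite ?mulgK ?mulgKV.
rewrite -sumr_const; apply: eq_big => g; first by rewrite mulgK.
by rewrite mulgK => /pair_stabP gP; rewrite pf_term_preserves_pairs.
Qed.

End FullSum.

(** * Pfaffians of congruent forms *)

Section Congruence.
Variable R : comNzRingType.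

Lemma prod_pairs (F : 'I_n -> R) :
  \prod_(k < n) F k = \prod_(i < h) (F (lo i) * F (hi i)).
Proof.
rewrite (reindex (fun x : 'I_h * bool => slot x.1 x.2)) /=; last first.
  exists (fun k => (pair_of k, odd k)) => [[i b] _|k _] /=.
    by rewrite pair_of_slot odd_slot.
  exact: slot_pair_of.
rewrite -(pair_bigA _ (fun i b => F (slot i b))) /=.
by apply: eq_bigr => i _; rewrite big_bool mulrC.
Qed.

Lemma prod_pairs_distr (p : nat) (T : 'I_h -> 'I_p -> 'I_p -> R) :
  \prod_(i < h) \sum_(l < p) \sum_(l' < p) T i l l' =
  \sum_(L : {ffun 'I_n -> 'I_p}) \prod_(i < h) T i (L (lo i)) (L (hi i)).
Proof.
under eq_bigr do rewrite pair_bigA.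
rewrite bigA_distr_bigA /=.
rewrite (reindex (fun L : {ffun 'I_n -> 'I_p} => [ffun i => (L (lo i), L (hi i))])) /=.
  by apply: eq_bigr => L _; apply: eq_bigr => i _; rewrite ffunE.
exists (fun g : {ffun 'I_h -> 'I_p * 'I_p} =>
          [ffun k : 'I_n => if odd k then (g (pair_of k)).2 else (g (pair_of k)).1]).
  move=> L _; apply/ffunP => k; rewrite !ffunE.
  by have [i [b ->]] := slotP k; rewrite pair_of_slot odd_slot; case: b.
move=> g _; apply/ffunP => i; rewrite !ffunE /=.
rewrite -[lo i]/(slot i false) -[hi i]/(slot i true) !odd_slot !pair_of_slot.
by case: (g i).
Qed.

Variables (p : nat) (u : 'I_p -> 'I_n -> R) (C : 'I_p -> 'I_p -> R).

(* The form [U^T C U], where [U] is the [p x n] matrix with entries [u l a]. *)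
Definition congr_form (a b : 'I_n) : R :=
  \sum_(l < p) \sum_(l' < p) C l l' * (u l a * u l' b).

Lemma congr_form_skew : skew C -> skew congr_form.
Proof.
move=> C_skew a b; rewrite /congr_form exchange_big -sumrN; apply: eq_bigr => l _.
rewrite -sumrN; apply: eq_bigr => l' _.
by rewrite C_skew mulNr [u l' a * _]mulrC.
Qed.

Lemma pf_full_congr_form : pf_full congr_form =
  \sum_(L : {ffun 'I_n -> 'I_p})
     \prod_(i < h) C (L (lo i)) (L (hi i)) * \det (\matrix_(k, a) u (L k) a).
Proof.
have expand s : \prod_(i < h) congr_form (s (lo i)) (s (hi i)) =
    \sum_(L : {ffun 'I_n -> 'I_p})
       \prod_(i < h) C (L (lo i)) (L (hi i)) * \prod_(k < n) u (L k) (s k).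
  rewrite /congr_form prod_pairs_distr; apply: eq_bigr => L _.
  by rewrite prod_pairs -big_split.
rewrite /pf_full /pf_term; under eq_bigr do rewrite expand big_distrr.
rewrite exchange_big /=; apply: eq_bigr => L _.
rewrite /determinant big_distrr /=; apply: eq_bigr => s _.
by rewrite mulrCA; congr (_ * (_ * _)); apply: eq_bigr => k _; rewrite mxE.
Qed.

Lemma det_noninjective (L : {ffun 'I_n -> 'I_p}) :
  ~~ injectiveb L -> \det (\matrix_(k, a) u (L k) a) = 0.
Proof.
case/injectivePn => k1 [k2 k12 E].
by rewrite (determinant_alternate k12) // => a; rewrite !mxE E.
Qed.

Lemma pf_full_congr_form_small : (p < n)%N -> pf_full congr_form = 0.
Proof.
move=> pn; rewrite pf_full_congr_form big1 // => L _; rewrite det_noninjective ?mulr0 //.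
by apply/negP => /injectiveP /leq_card; rewrite !card_ord; lia.
Qed.

End Congruence.

Lemma pf_full_congr_form_square (R : comNzRingType) (u C : 'I_n -> 'I_n -> R) :
  pf_full (congr_form u C) = \det (\matrix_(l, a) u l a) * pf_full C.
Proof.
rewrite pf_full_congr_form /pf_full big_distrr /=.
rewrite (bigID (fun L : {ffun 'I_n -> 'I_n} => injectiveb L)) /= addrC big1 ?add0r.
  rewrite (reindex (@pval _)) /=; last first.
    by exists (insubd (1%g : 'S_n)) => f fP; [exact: valKd | exact: insubdK].
  apply: eq_big => /= [s | s _]; first by rewrite (valP s).
  have -> : \matrix_(k, a) u (pval s k) a = row_perm s (\matrix_(l, a) u l a).
    by apply/matrixP => k a; rewrite !mxE pvalE.
  rewrite row_permE det_mulmx det_perm /pf_term; under eq_bigr do rewrite pvalE.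
  by rewrite mulrCA [RHS]mulrCA [_ * \det _]mulrC.
by move=> L /det_noninjective ->; rewrite mulr0.
Qed.

(** * The antidiagonal form *)

Lemma val_nest_perm k :
  nat_of_ord (nest_perm n k) = if odd k then (n.-1 - k./2)%N else k./2.
Proof. by move: k; have := @nest_perm_double h; rewrite -mul2n -even_halfE. Qed.

Lemma nest_perm_lo i : nat_of_ord (nest_perm n (lo i)) = i.
Proof. by rewrite val_nest_perm -[lo i]/(slot i false) val_slot addn0 oddM /=; lia. Qed.

Lemma nest_perm_hi i : nat_of_ord (nest_perm n (hi i)) = (n.-1 - i)%N.
Proof. by rewrite val_nest_perm -[hi i]/(slot i true) val_slot oddD oddM /=; lia. Qed.

Lemma odd_nest_perm : odd_perm (nest_perm n) = false.
Proof. by have := odd_nest_perm_double h; rewrite -mul2n -even_halfE. Qed.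

Lemma nest_perm_canon : canon_pairing (nest_perm n).
Proof.
apply/andP; split; apply/forallP => i.
  change (nest_perm n (lo i) < nest_perm n (hi i))%N.
  by rewrite nest_perm_lo nest_perm_hi; have := ltn_ord i; have := even_halfE; lia.
apply/forallP => j; apply/implyP => ij.
by change (nest_perm n (lo i) < nest_perm n (lo j))%N; rewrite !nest_perm_lo.
Qed.

Lemma canon_pairing_nest (s : 'S_n) : canon_pairing s ->
  (forall i, (s (lo i) + s (hi i))%N = n.-1) -> s = nest_perm n.
Proof.
move=> /canon_pairingP [s_pair s_incr] s_sum.
have s_lo_lt i : (s (lo i) < h)%N.
  by have := s_pair i; have := s_sum i; have := even_halfE; lia.
have s_lo i : nat_of_ord (s (lo i)) = i.
  by have := incr_ord_id (F := fun i => Ordinal (s_lo_lt i)) s_incr i => /(congr1 val).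
apply/permP => k; apply: val_inj => /=; have [i [[] ->]] := slotP k => /=.
  by rewrite nest_perm_hi; have := s_sum i; rewrite s_lo; lia.
by rewrite nest_perm_lo s_lo.
Qed.

Section Antidiagonal.
Variables (R : comNzRingType) (c : nat -> R).

Definition antidiag (l l' : 'I_n) : R := if (l + l' == n.-1)%N then c l' else 0.

(* Only the nested pairing meets the antidiagonal in every factor. *)
Lemma pfaffian_antidiag : pfaffian antidiag = \prod_(i < h) c (n.-1 - i)%N.
Proof.
rewrite /pfaffian (bigD1 (nest_perm n)) ?nest_perm_canon //= [X in _ + X]big1 ?addr0.
  rewrite odd_nest_perm expr0 mul1r; apply: eq_bigr => i _.
  change (antidiag (nest_perm n (lo i)) (nest_perm n (hi i)) = c (n.-1 - i)%N).
  rewrite /antidiag nest_perm_lo nest_perm_hi ifT //.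
  by apply/eqP; have := ltn_ord i; have := even_halfE; lia.
move=> s /andP [s_canon s_nest].
have [/forallP s_sum|] := boolP [forall i, (s (lo i) + s (hi i) == n.-1)%N].
  by rewrite (canon_pairing_nest s_canon (fun i => eqP (s_sum i))) eqxx in s_nest.
rewrite negb_forall => /existsP [i /negbTE s_sum].
by rewrite (bigD1 i) //= -/(lo i) -/(hi i) {1}/antidiag s_sum mul0r mulr0.
Qed.

End Antidiagonal.

Lemma pfaffian_binom_coef (R : comNzRingType) :
  pfaffian (fun l l' : 'I_n => binom_coef R n.-1 l l')
    = (-1) ^+ 'C(h.+1, 2) * \prod_(k < h) ('C(n.-1, k))%:R.
Proof.
rewrite (pfaffian_antidiag (fun l' => (-1) ^+ l' * ('C(n.-1, l'))%:R)).
rewrite -prod_sign_succ -big_split /=; apply: eq_bigr => i _.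
have := ltn_ord i; have := even_halfE => n2 ih.
rewrite bin_sub; last by lia.
congr (_ * _); rewrite -signr_odd -[RHS]signr_odd (_ : n.-1 - i = n - i.+1)%N; last by lia.
by rewrite oddB ?(negbTE n_even) //; lia.
Qed.

Section RatAlgebra.
Variable R : comAlgType rat.

Lemma pfaffian_congr_form (u C : 'I_n -> 'I_n -> R) : skew C ->
  pfaffian (congr_form u C) = \det (\matrix_(l, a) u l a) * pfaffian C.
Proof.
move=> C_skew; apply: (mulrn_rat_inj pair_stab_gt0) => /=.
rewrite -mulrnAr -!pf_full_pfaffian //; last exact: congr_form_skew.
by rewrite (pf_full_congr_form_square u C).
Qed.

Lemma pfaffian_congr_form_small (p : nat) (u : 'I_p -> 'I_n -> R) (C : 'I_p -> 'I_p -> R) :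
  (p < n)%N -> skew C -> pfaffian (congr_form u C) = 0.
Proof.
move=> pn C_skew; apply: (mulrn_rat_inj pair_stab_gt0) => /=.
rewrite -pf_full_pfaffian; last exact: congr_form_skew.
by rewrite (pf_full_congr_form_small u C pn) mul0rn.
Qed.

End RatAlgebra.

End Pairing.

Theorem mainTheorem12 (n : nat) (hn : (2 <= n)%N) (hev : ~~ odd n) :
  pfaffian (fun i j : 'I_n => ('X_i - 'X_j : {mpoly rat[n]}) ^+ n.-1)
    = (-1) ^+ 'C(n./2, 2) * (\prod_(k < n./2) ('C(n.-1, k))%:R)
      * \prod_(i < n) \prod_(j < n | (i < j)%N) ('X_i - 'X_j)
  /\
  (forall m : nat, (1 <= m)%N -> (2 * m < n)%N ->
     pfaffian (fun i j : 'I_n => ('X_i - 'X_j : {mpoly rat[n]}) ^+ (2 * m).-1) = 0).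
Proof.
have n1_odd : odd n.-1 by move: hn hev; case: n => // n' _ /=; rewrite negbK.
have expand k p : k.+1 = p ->
    pfaffian (fun i j : 'I_n => ('X_i - 'X_j : {mpoly rat[n]}) ^+ k) =
    pfaffian (congr_form (fun (l : 'I_p) a => 'X_a ^+ l) (fun l l' => binom_coef _ k l l')).
  by move=> kp; apply: eq_pfaffian => a b; exact: subrX_binom_coef.
have binom_skew k p : odd k -> skew (fun l l' : 'I_p => binom_coef {mpoly rat[n]} k l l').
  by move=> k_odd l l'; exact: binom_coef_skew.
split=> [|m m_gt0 m_lt].
  rewrite (expand _ n) ?prednK ?(ltnW hn) //.
  rewrite (pfaffian_congr_form hev); last exact: binom_skew.
  rewrite det_powers prod_ltn_opp (pfaffian_binom_coef hev).
  by rewrite -(sign_binom2_double _ n./2) -mul2n -(even_halfE hev); ring.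
rewrite (expand _ (2 * m)%N) ?prednK ?muln_gt0 //.
apply: (pfaffian_congr_form_small hev) => //; apply: binom_skew.
by case: m m_gt0 {m_lt} => // m _; rewrite mulnS /= oddM.
Qed.
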